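(* Let $M$ and $H$ be $3$-connected simple matroids on the same ground set, each of rank at least $4$, and suppose that a sequence $x_1,\dots,x_n,y_1,\dots,y_n$ is a carambole of both $M$ and $H$, with filament $L=\{y_1,\dots,y_n\}$. If $M/L=H/L$, then $M=H$.
   Context: A line of a matroid $M$ is a rank-$2$ set. For $n\ge3$, a sequence $x_1,\dots,x_n,y_1,\dots,y_n$ of elements of $M$ is a carambole of $M$ if $L:=\{y_1,\dots,y_n\}$ is a line of $M$ with $n$ distinct elements such that $\mathrm{si}(M/L)$ (the simplification) is $3$-connected, and, for each $i$, $(L-y_i)\cup x_i$ is a cocircuit of $M$; $L$ is the filament of the carambole. *)

From mathcomp Require Import all_boot.
Set Implicit Arguments. Unset Strict Implicit. Unset Printing Implicit Defensive.

(* A matroid on a finite type T: a ground set together with a rank function.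
   The rank function is only meaningful on subsets of the ground set. *)
Record matroid (T : finType) := Matroid { ground : {set T}; rk : {set T} -> nat }.

Section Matroids.
Variable T : finType.
Implicit Types (M : matroid T) (X Y S L C : {set T}).

Definition is_matroid M : Prop :=
  [/\ (forall X, X \subset ground M -> rk M X <= #|X|),
      (forall X Y, X \subset Y -> Y \subset ground M -> rk M X <= rk M Y) &
      (forall X Y, X \subset ground M -> Y \subset ground M ->
         rk M (X :|: Y) + rk M (X :&: Y) <= rk M X + rk M Y)].

Definition matroid_eq M (H : matroid T) : Prop :=
  ground M = ground H /\ forall X, X \subset ground M -> rk M X = rk H X.

Definition mrank M : nat := rk M (ground M).

Definition contract M L : matroid T :=
  Matroid (ground M :\: L) (fun X => rk M (X :|: L) - rk M L).
Definition restrict M S : matroid T := Matroid S (rk M).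

Definition loop M (e : T) : bool := (e \in ground M) && (rk M [set e] == 0).
Definition parallel M (e f : T) : bool :=
  [&& e \in ground M, f \in ground M, e != f, rk M [set e] == 1,
      rk M [set f] == 1 & rk M [set e; f] == 1].

Definition simple M : Prop :=
  (forall e, e \in ground M -> rk M [set e] = 1) /\
  (forall e f, e \in ground M -> f \in ground M -> e != f -> rk M [set e; f] = 2).

(* simplification: delete loops and, in each parallel class, keep only the
   element that comes first in the enumeration order of T *)
Definition si_set M : {set T} :=
  [set e in ground M | ~~ loop M e &&
     [forall f, parallel M f e ==> (enum_rank e < enum_rank f)%N]].
Definition si M : matroid T := restrict M (si_set M).

Definition k_separation M (k : nat) X : Prop :=
  [/\ X \subset ground M, k <= #|X|, k <= #|ground M :\: X| &
      rk M X + rk M (ground M :\: X) < mrank M + k].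

Definition n_connected M (n : nat) : Prop :=
  forall k, 1 <= k < n -> forall X, ~ k_separation M k X.

Definition cocircuit M C : Prop :=
  [/\ C \subset ground M, rk M (ground M :\: C) < mrank M &
      forall D : {set T}, D \proper C -> ~ (rk M (ground M :\: D) < mrank M)].

Definition line M L : Prop := L \subset ground M /\ rk M L = 2.

Definition filament (n : nat) (y : 'I_n -> T) : {set T} := [set y i | i : 'I_n].

Definition carambole M (n : nat) (x y : 'I_n -> T) : Prop :=
  [/\ 3 <= n,
      (forall i, x i \in ground M) /\ injective y,
      line M (filament y),
      n_connected (si (contract M (filament y))) 3 &
      forall i, cocircuit M ((filament y :\ y i) :|: [set x i])].

End Matroids.

(* Agreement of the ranks of M and H on a set X is propagated in three moves.
   Sets containing two points y_i, y_j span the line L, so their rank is read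
   off M/L = H/L.  A cocircuit common to M and H raises the rank of every set
   disjoint from it by exactly one when one of its points is added, so
   agreement on X is equivalent to agreement on X + e for such e.  Using the
   cocircuits (L - y_i) + x_i one adds points y_j to any set meeting L in at
   most one point until it contains two of them; the only obstruction,
   x_i = y_i, would make the line L a cocircuit, hence a 2-separation
   since r >= 4. *)

From mathcomp Require Import all_boot zify.
Set Implicit Arguments. Unset Strict Implicit. Unset Printing Implicit Defensive.

Lemma exists_ord_neq n (i : 'I_n) : 1 < n -> exists j : 'I_n, j != i.
Proof.
move=> n_gt1; have : 0 < #|[set~ i]| by rewrite cardsC1 card_ord; lia.
by case/card_gt0P => j; rewrite !inE; exists j.
Qed.

Section Filament.
Variables (T : finType) (n : nat) (y : 'I_n -> T).

Lemma mem_filament i : y i \in filament y.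
Proof. exact: imset_f. Qed.

Lemma filamentP z : reflect (exists i, z = y i) (z \in filament y).
Proof. by apply: (iffP imsetP) => [[i _ ->]|[i ->]]; exists i. Qed.

Lemma card_filament : injective y -> #|filament y| = n.
Proof. by move=> y_inj; rewrite card_imset // card_ord. Qed.

End Filament.

Section Rank.
Variables (T : finType) (M : matroid T).
Hypothesis M_matroid : is_matroid M.
Local Notation E := (ground M).
Implicit Types X Y Z C L : {set T}.

Lemma rk_card X : X \subset E -> rk M X <= #|X|.
Proof. by case: M_matroid => h _ _; apply: h. Qed.

Lemma rk_mono X Y : X \subset Y -> Y \subset E -> rk M X <= rk M Y.
Proof. by case: M_matroid => _ h _; apply: h. Qed.

Lemma rk_submod X Y : X \subset E -> Y \subset E ->
  rk M (X :|: Y) + rk M (X :&: Y) <= rk M X + rk M Y.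
Proof. by case: M_matroid => _ _ h; apply: h. Qed.

Lemma rk_setU1_le e X : e \in E -> X \subset E -> rk M (e |: X) <= (rk M X).+1.
Proof.
move=> eE sXE; have seE : [set e] \subset E by rewrite sub1set.
have := rk_submod seE sXE; have := rk_card seE; rewrite cards1; lia.
Qed.

Lemma rk_setU_spanned X Y Z : X \subset E -> Y \subset E ->
  Z \subset X -> Z \subset Y -> rk M Z = rk M Y -> rk M (X :|: Y) = rk M X.
Proof.
move=> sXE sYE sZX sZY rkZ.
have sXYE : X :|: Y \subset E by rewrite subUset sXE.
have := rk_mono (subsetUl X Y) sXYE; have := rk_submod sXE sYE.
have sZXY : Z \subset X :&: Y by rewrite subsetI sZX.
have := rk_mono sZXY (subset_trans (subsetIl X Y) sXE); lia.
Qed.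

Lemma rk_setU1_cocircuit C X e : cocircuit M C -> X \subset E :\: C -> e \in C ->
  rk M (e |: X) = (rk M X).+1.
Proof.
case=> sCE rkF_lt C_min sXF eC; set F := E :\: C in sXF rkF_lt *.
have eE : e \in E := subsetP sCE e eC.
have sFE : F \subset E := subsetDl E C.
have sXE : X \subset E := subset_trans sXF sFE.
(* minimality of C: adding e to F restores full rank *)
have rk_eF : mrank M <= rk M (e |: F).
  have eF : E :\: (C :\ e) = e |: F.
    apply/setP=> z; rewrite !inE; case: eqP => [->|] //=; by rewrite eE.
  by rewrite -eF leqNgt; apply/negP/C_min; rewrite properD1.
have FU : F :|: (e |: X) = e |: F by rewrite setUCA (setUidPl sXF).
have FI : F :&: (e |: X) = X.
  have eF : [disjoint [set e] & F] by rewrite disjoints1 inE eC.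
  by rewrite setIUr (setIidPr sXF) setIC (disjoint_setI0 eF) set0U.
have sXeE : e |: X \subset E by rewrite subUset sub1set eE.
have := rk_submod sFE sXeE; rewrite FU FI.
have := rk_setU1_le eE sXE; move: rkF_lt rk_eF; lia.
Qed.

Lemma line_not_cocircuit L : n_connected M 3 -> 4 <= mrank M ->
  line M L -> 2 <= #|L| -> ~ cocircuit M L.
Proof.
move=> M3 rM4 [sLE rkL] L2 [_ rk_lt _].
have sDE : E :\: L \subset E := subsetDl E L.
have LD : L :|: E :\: L = E by rewrite -{2}(setID E L) (setIidPr sLE).
have := rk_submod sLE sDE; rewrite {}LD => rk_E.
have card_D := rk_card sDE.
apply: (M3 2 erefl L); split=> //.
all: by move: rk_lt rM4 rk_E card_D; rewrite /mrank; lia.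
Qed.

End Rank.

Lemma carambole_x_neq_y (T : finType) (M : matroid T) n (x y : 'I_n -> T) i :
  is_matroid M -> n_connected M 3 -> 4 <= mrank M -> carambole M x y -> x i != y i.
Proof.
move=> M_matroid M3 rM4 [n3 [_ y_inj] lineL _ cocircuits].
apply/eqP => xy; apply: (line_not_cocircuit M_matroid M3 rM4 lineL).
  by rewrite card_filament //; lia.
by have := cocircuits i; rewrite xy setUC setD1K ?mem_filament.
Qed.

Section Agreement.
Variables (T : finType) (M H : matroid T).
Hypotheses (M_matroid : is_matroid M) (H_matroid : is_matroid H).
Hypothesis same_ground : ground M = ground H.
Implicit Types X Z C L : {set T}.

Lemma rk_eq_setU1_cocircuit C X e :
  cocircuit M C -> cocircuit H C -> X \subset ground M :\: C -> e \in C ->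
  rk M (e |: X) = rk H (e |: X) <-> rk M X = rk H X.
Proof.
move=> cocM cocH sXF eC.
rewrite (rk_setU1_cocircuit M_matroid cocM sXF eC).
rewrite (rk_setU1_cocircuit H_matroid cocH _ eC) -?same_ground //.
by split=> [[]|->].
Qed.

Lemma rk_eq_setU_contract L Z :
  matroid_eq (contract M L) (contract H L) -> L \subset ground M ->
  rk M L = rk H L -> Z \subset ground M -> rk M (Z :|: L) = rk H (Z :|: L).
Proof.
move=> [_ contract_eq] sLE rkL sZE.
have sZLE : Z :|: L \subset ground M by rewrite subUset sZE.
have ZL : Z :\: L :|: L = Z :|: L.
  by apply/setP=> z; rewrite !inE; case: (z \in L); rewrite ?orbT ?orbF.
have := contract_eq (Z :\: L) (setSD L sZE); rewrite /= ZL.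
have := rk_mono M_matroid (subsetUr Z L) sZLE.
have sZLH : Z :|: L \subset ground H by rewrite -same_ground.
have := rk_mono H_matroid (subsetUr Z L) sZLH; lia.
Qed.

End Agreement.

Section Carambole.
Variables (T : finType) (M H : matroid T) (n : nat) (x y : 'I_n -> T).
Hypotheses (M_matroid : is_matroid M) (H_matroid : is_matroid H).
Hypothesis same_ground : ground M = ground H.
Hypotheses (M_simple : simple M) (H_simple : simple H).
Hypotheses (n_gt1 : 1 < n) (y_inj : injective y).
Local Notation E := (ground M).
Local Notation L := (filament y).
Hypotheses (M_line : line M L) (H_line : line H L).
Hypothesis M_cocircuit : forall i, cocircuit M ((L :\ y i) :|: [set x i]).
Hypothesis H_cocircuit : forall i, cocircuit H ((L :\ y i) :|: [set x i]).
Hypothesis x_neq_y : forall i, x i != y i.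
Hypothesis contract_eq : matroid_eq (contract M L) (contract H L).
Implicit Types X : {set T}.

Lemma y_in_ground i : y i \in E.
Proof. by apply: (subsetP M_line.1); apply: mem_filament. Qed.

Lemma rk_eq_two_y X i j : X \subset E -> i != j -> y i \in X -> y j \in X ->
  rk M X = rk H X.
Proof.
move=> sXE ij yiX yjX.
have yij_neq : y i != y j by rewrite (inj_eq y_inj).
have sPX : [set y i; y j] \subset X by rewrite subUset !sub1set yiX.
have sPL : [set y i; y j] \subset L by rewrite subUset !sub1set !mem_filament.
have [sLE rkML] := M_line; have [sLH rkHL] := H_line.
have sXH : X \subset ground H by rewrite -same_ground.
rewrite -(rk_setU_spanned M_matroid sXE sLE sPX sPL) ?rkML; last first.
  by apply: M_simple.2; rewrite ?y_in_ground.
rewrite -(rk_setU_spanned H_matroid sXH sLH sPX sPL) ?rkHL; last first.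
  by apply: H_simple.2; rewrite -?same_ground ?y_in_ground.
by apply: rk_eq_setU_contract; rewrite ?rkML ?rkHL.
Qed.

Lemma rk_eq_add_y X i j : X \subset E -> X :&: L \subset [set y i] -> j != i ->
  rk M (y j |: (X :\ x i)) = rk H (y j |: (X :\ x i)) -> rk M X = rk H X.
Proof.
move=> sXE XL ji; set Z := X :\ x i.
have sZF : Z \subset E :\: ((L :\ y i) :|: [set x i]).
  apply/subsetP=> z /setD1P [zx zX].
  rewrite !inE (subsetP sXE z zX) (negbTE zx) orbF andbT.
  case: (boolP (z \in L)) => [zL|]; rewrite ?andbF ?andbT ?negbK //.
  by rewrite -in_set1; apply: (subsetP XL); rewrite inE zX.
have step e : e \in (L :\ y i) :|: [set x i] ->
    rk M (e |: Z) = rk H (e |: Z) <-> rk M Z = rk H Z.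
  exact: (rk_eq_setU1_cocircuit M_matroid H_matroid same_ground
            (M_cocircuit i) (H_cocircuit i) sZF).
have yjC : y j \in (L :\ y i) :|: [set x i].
  by rewrite !inE (inj_eq y_inj) ji mem_filament.
move/(step _ yjC) => rk_eq_Z.
have [xiX|xiNX] := boolP (x i \in X).
  by rewrite -(setD1K xiX); apply/(step (x i)) => //; rewrite !inE eqxx orbT.
suff <- : Z = X by [].
by apply/setDidPl; rewrite disjoint_sym disjoints1.
Qed.

Lemma rk_eq_one_y X i : X \subset E -> X :&: L \subset [set y i] -> y i \in X ->
  rk M X = rk H X.
Proof.
move=> sXE XL yiX; have [j ji] := exists_ord_neq i n_gt1.
apply: (rk_eq_add_y sXE XL ji); apply: (rk_eq_two_y _ ji).
- by rewrite subUset sub1set y_in_ground (subset_trans (subsetDl X _) sXE).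
- exact: setU11.
- by rewrite setU1r // !inE eq_sym x_neq_y.
Qed.

Lemma rk_eq_disjoint X : X \subset E -> X :&: L = set0 -> rk M X = rk H X.
Proof.
move=> sXE XL; pose i : 'I_n := Ordinal (ltnW n_gt1).
have [j ji] := exists_ord_neq i n_gt1.
apply: (rk_eq_add_y (i := i) sXE _ ji); first by rewrite XL sub0set.
apply: (rk_eq_one_y (i := j)); last exact: setU11.
- by rewrite subUset sub1set y_in_ground (subset_trans (subsetDl X _) sXE).
- apply/subsetP=> z; rewrite !inE => /andP [/orP [//|/andP [_ zX]] zL].
  suff : z \in set0 by rewrite inE.
  by rewrite -XL inE zX.
Qed.

Lemma rk_eq_carambole X : X \subset E -> rk M X = rk H X.
Proof.
move=> sXE; have [XL0|XL2|/eqP/cards1P [z XLz]] := ltngtP #|X :&: L| 1.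
- by apply: rk_eq_disjoint => //; apply: cards0_eq; lia.
- case/card_gt1P: XL2 => a [b [/setIP [aX /filamentP [i ai]]]].
  case/setIP=> bX /filamentP [j bj]; rewrite {}ai {}bj in aX bX * => yij.
  by apply: (rk_eq_two_y sXE _ aX bX); apply: contraNneq yij => ->.
- have /setIP [zX /filamentP [i zy]] : z \in X :&: L by rewrite XLz set11.
  by rewrite zy in zX XLz; apply: (rk_eq_one_y sXE _ zX); rewrite XLz.
Qed.

End Carambole.

Theorem proposition4p4 (T : finType) (M H : matroid T) (n : nat)
    (x y : 'I_n -> T) :
  is_matroid M -> is_matroid H ->
  ground M = ground H ->
  simple M -> simple H ->
  n_connected M 3 -> n_connected H 3 ->
  4 <= mrank M -> 4 <= mrank H ->
  carambole M x y -> carambole H x y ->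
  matroid_eq (contract M (filament y)) (contract H (filament y)) ->
  matroid_eq M H.
Proof.
move=> M_matroid H_matroid same_ground M_simple H_simple M3 _ rM4 _ M_car H_car
  contract_eq.
have x_neq_y i := carambole_x_neq_y i M_matroid M3 rM4 M_car.
have [n3 [_ y_inj] M_line _ M_cocircuit] := M_car.
have [_ _ H_line _ H_cocircuit] := H_car.
split=> //; exact: (rk_eq_carambole M_matroid H_matroid same_ground M_simple
  H_simple (ltnW n3) y_inj M_line H_line M_cocircuit H_cocircuit x_neq_y contract_eq).
Qed.
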